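(* Let $n\ge 2$ and let $\mathcal{A}$ be an antichain in $Q(P_n)$. Then there exists an antichain $\mathcal{A}'$ contained in \[ Q'(P_n)=\bigcup_{\frac{n-1}{4}<r<\frac{n+2}{3}} Q^{(r)}(P_n) \] with $|\mathcal{A}|\le|\mathcal{A}'|$.
   Context: $Q(P_n)$ is the family of subsets of $[n]=\{1,\dots,n\}$ containing no two consecutive integers, and $Q^{(r)}(P_n)$ its members of size $r$ (the union is over integers $r$). An antichain is a subfamily in which no member is a proper subset of another. *)

(* The ground set [n] = {1,...,n} is modelled by 'I_n
   (element k of 'I_n stands for k+1); consecutiveness is shift-invariant. *)
From mathcomp Require Import all_boot.
Set Implicit Arguments. Unset Strict Implicit. Unset Printing Implicit Defensive.

Definition noConsec (n : nat) (A : {set 'I_n}) : bool :=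
  [forall i : 'I_n, forall j : 'I_n, (i \in A) && (j \in A) ==> (val j != (val i).+1)].

Definition inQ (n : nat) (F : {set {set 'I_n}}) : bool :=
  [forall A in F, noConsec A].

(* Q'(P_n): members of Q(P_n) whose size r satisfies (n-1)/4 < r < (n+2)/3,
   i.e. n - 1 < 4 r and 3 r < n + 2 (over the integers; n >= 2 so n-1 is exact). *)
Definition inQ' (n : nat) (F : {set {set 'I_n}}) : bool :=
  [forall A in F, [&& noConsec A, n.-1 < 4 * #|A| & 3 * #|A| < n + 2]].

Definition antichain (T : finType) (F : {set {set T}}) : bool :=
  [forall A in F, forall B in F, ~~ (A \proper B)].

From mathcomp Require Import all_boot zify.
Set Implicit Arguments. Unset Strict Implicit. Unset Printing Implicit Defensive.

(* A level-by-level shifting argument.  Call x a free site of A if A + x still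
   has no two consecutive elements.  A set of size r has at least n - 3r free
   sites (each element kills itself and its two neighbours), while a nonempty
   set of free sites has at most n - 2r elements (sites, members and their
   right neighbours are disjoint and miss the right neighbour of the largest
   site).  Double counting the covering pairs between consecutive levels of
   Q(P_n) then shows that the upper shadow of the lowest level r is at least as
   large as that level when 4r < n, and the lower shadow of the top level r is
   at least as large when 3r >= n + 2.  Replacing the extreme level of the
   antichain by its shadow keeps an antichain of Q(P_n) and does not decrease
   its size; iterating pushes every level into (n-1)/4 < r < (n+2)/3. *)

Lemma double_count_leq (T : finType) (G U : {set T}) (R : rel T) d e :
  (forall a, a \in G -> d <= #|[set b in U | R a b]|) ->
  (forall b, b \in U -> #|[set a in G | R a b]| <= e) ->
  #|G| * d <= #|U| * e.
Proof.
move=> lbG ubU.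
have card_sum (V : {set T}) (P : pred T) : #|[set b in V | P b]| = \sum_(b in V) P b.
  rewrite -sum1_card big_mkcond [RHS]big_mkcond /=.
  by apply: eq_bigr => b _; rewrite inE; case: (b \in V); case: (P b).
rewrite -!sum_nat_const.
apply: (@leq_trans (\sum_(a in G) \sum_(b in U) R a b)).
  by apply: leq_sum => a aG; rewrite -card_sum; exact: lbG.
rewrite exchange_big /=; apply: leq_sum => b bU.
by rewrite -(card_sum G (R^~ b)); exact: ubU.
Qed.

Lemma cardsU_disjoint (T : finType) (A B : {set T}) :
  [disjoint A & B] -> #|A :|: B| = #|A| + #|B|.
Proof. by move=> disjAB; apply/eqP; rewrite (eq_leqif (leq_card_setU A B)). Qed.

Section NoConsecutive.

Variable n : nat.
Implicit Types (A B : {set 'I_n}) (F G : {set {set 'I_n}}).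

Lemma noConsecP A :
  reflect (forall i j : 'I_n, i \in A -> j \in A -> j != i.+1 :> nat) (noConsec A).
Proof.
apply: (iffP forallP) => [noA i j iA jA | noA i].
  by move/forallP: (noA i) => /(_ j); rewrite iA jA.
by apply/forallP => j; apply/implyP => /andP[]; exact: noA.
Qed.

Lemma noConsecPn A :
  reflect (exists i j : 'I_n, [/\ i \in A, j \in A & j = i.+1 :> nat]) (~~ noConsec A).
Proof.
apply: (iffP idP) => [| [i [j [iA jA ij]]]]; last first.
  by apply/noConsecP => /(_ i j iA jA); rewrite ij eqxx.
rewrite negb_forall => /existsP[i]; rewrite negb_forall => /existsP[j].
by rewrite negb_imply negbK => /andP[/andP[iA jA] /eqP ij]; exists i, j.
Qed.

Lemma noConsecS A B : A \subset B -> noConsec B -> noConsec A.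
Proof.
by move=> sAB /noConsecP noB; apply/noConsecP => i j /(subsetP sAB) + /(subsetP sAB); exact: noB.
Qed.

Lemma inQP F : reflect (forall A, A \in F -> noConsec A) (inQ F).
Proof. exact: forall_inP. Qed.

Definition freeSites A := [set x | (x \notin A) && noConsec (x |: A)].

Lemma card_freeSites_lb A : noConsec A -> n <= #|freeSites A| + 3 * #|A|.
Proof.
move=> noA.
pose succ (a : 'I_n) : 'I_n := insubd a (val a).+1.
pose pred (a : 'I_n) : 'I_n := insubd a (val a).-1.
have blocked : ~: freeSites A \subset A :|: succ @: A :|: pred @: A.
  apply/subsetP => x; rewrite !inE negb_and negbK.
  case: (x \in A) => //= /noConsecPn[i [j []]].
  rewrite !in_setU1 => /orP[/eqP ix | iA] /orP[/eqP jx | jA] ij.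
  - by move: ij; rewrite ix jx; lia.
  - apply/orP; right; apply/imsetP; exists j => //; apply: val_inj.
    by rewrite val_insubd -ix; move: ij (ltn_ord i) => /=; case: ifP; lia.
  - apply/orP; left; apply/imsetP; exists i => //; apply: val_inj.
    by rewrite val_insubd -jx; move: ij (ltn_ord j) => /=; case: ifP; lia.
  - by move/noConsecP: noA => /(_ i j iA jA); rewrite ij eqxx.
have cover_card : #|A :|: succ @: A :|: pred @: A| <= 3 * #|A|.
  rewrite [3 * _](_ : _ = #|A| + #|A| + #|A|); last by lia.
  apply: leq_trans (leq_card_setU _ _).1 _; rewrite leq_add ?leq_imset_card //.
  by apply: leq_trans (leq_card_setU _ _).1 _; rewrite leq_add2l leq_imset_card.
have := leq_trans (subset_leq_card blocked) cover_card.
by rewrite cardsCs setCK card_ord; lia.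
Qed.

Lemma card_freeSites_ub A x0 : noConsec A -> x0 \in freeSites A ->
  #|freeSites A| + 2 * #|A| <= n.
Proof.
move=> noA x0free.
pose w (a : 'I_n) : 'I_n.+1 := widen_ord (leqnSn n) a.
pose s (a : 'I_n) : 'I_n.+1 := lift ord0 a.
have w_inj : injective w by move=> a b /(congr1 val) /= /val_inj.
have s_inj : injective s by move=> a b /(congr1 val); rewrite /= /bump /=; case=> /val_inj.
have [x xfree xmax] := arg_maxnP (fun i : 'I_n => val i) x0free.
have {}xfree : x \in freeSites A := xfree.
have {}xmax j : j \in freeSites A -> j <= x := xmax j.
move: (xfree); rewrite inE => /andP[xA /noConsecP noxA].
have missed : w @: freeSites A :|: w @: A :|: s @: A \subset ~: [set s x].
  apply/subsetP => y; rewrite !inE => /orP[/orP[] |] /imsetP[a aS ->];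
    apply/eqP => /(congr1 val) /=; rewrite /bump /= => ya.
  - by move: (xmax a aS) ya; lia.
  - by move: (noxA x a (setU11 _ _) (setU1r _ aS)); rewrite ya eqxx.
  - by move: ya => [] /val_inj ax; move: xA; rewrite -ax aS.
have disj_wfree_wA : [disjoint w @: freeSites A & w @: A].
  apply/pred0P => y /=; apply/negP => /andP[/imsetP[a afree ->] /imsetP[b bA /w_inj ab]].
  by move: afree; rewrite inE ab bA.
have disj_w_sA : [disjoint w @: freeSites A :|: w @: A & s @: A].
  apply/pred0P => y /=; apply/negP => /andP[/[!inE] /orP[] /imsetP[a aS ->] /imsetP[b bA]]
    /(congr1 val) /=; rewrite /bump /= => ab.
  - move: aS; rewrite inE => /andP[_ /noConsecP noaA].
    by move: (noaA b a (setU1r _ bA) (setU11 _ _)) ab; lia.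
  - by move/noConsecP: noA => /(_ b a bA aS); move: ab; lia.
have := subset_leq_card missed.
rewrite cardsC1 card_ord (cardsU_disjoint disj_w_sA) (cardsU_disjoint disj_wfree_wA) !card_imset //.
by rewrite mul2n -addnn addnA; apply.
Qed.

Definition covered A B := (A \subset B) && (#|B| == #|A|.+1).

Lemma covered_proper A B : covered A B -> A \proper B.
Proof. by case/andP=> sAB /eqP cB; rewrite properEcard sAB cB ltnSn. Qed.

Lemma coveredP A B : reflect (exists2 x, x \notin A & B = x |: A) (covered A B).
Proof.
apply: (iffP idP) => [cAB | [x xA ->]]; last by rewrite /covered subsetUr cardsU1 xA eqxx.
have /properP [sAB [x xB xA]] := covered_proper cAB.
exists x => //; apply/eqP; rewrite eq_sym eqEcard.
move: cAB => /andP[_ /eqP ->]; rewrite cardsU1 xA leqnn andbT.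
by rewrite subUset sub1set xB sAB.
Qed.

Lemma covered_setD1 B x : x \in B -> covered (B :\ x) B.
Proof. by move=> xB; rewrite -{2}(setD1K xB); apply/coveredP; exists x; rewrite ?setD11. Qed.

Lemma covered_card A B : covered A B -> #|B| = #|A|.+1.
Proof. by case/andP=> _ /eqP. Qed.

Definition shade G := [set B | noConsec B && [exists A in G, covered A B]].
Definition shadow G := [set A | noConsec A && [exists B in G, covered A B]].

Lemma card_shade G r :
  (forall A, A \in G -> noConsec A /\ #|A| = r) -> 4 * r < n -> #|G| <= #|shade G|.
Proof.
move=> levelG r_small.
have up_degree A : A \in G -> n - 3 * r <= #|[set B in shade G | covered A B]|.
  move=> AG; have [noA cardA] := levelG A AG.
  have := card_freeSites_lb noA; rewrite cardA => free_lb.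
  apply: (@leq_trans #|freeSites A|); first by lia.
  rewrite -(@card_in_imset _ _ (fun x => x |: A)); last first.
    move=> x y; rewrite !inE => /andP[xA _] /andP[yA _] xy.
    by move: (setU11 x A); rewrite xy in_setU1 (negbTE xA) orbF => /eqP.
  apply/subset_leq_card/subsetP => _ /imsetP[x /[!inE] /andP[xA noxA] ->].
  have cAx : covered A (x |: A) by apply/coveredP; exists x.
  by rewrite noxA cAx andbT /=; apply/existsP; exists A; rewrite AG.
have down_degree B : B \in shade G -> #|[set A in G | covered A B]| <= r.+1.
  rewrite inE => /andP[_ /existsP[A0 /andP[A0G /covered_card cardB]]].
  rewrite (proj2 (levelG _ A0G)) in cardB; rewrite -cardB.
  apply: (leq_trans _ (leq_imset_card (fun x => B :\ x) B)).
  apply/subset_leq_card/subsetP => A; rewrite inE => /andP[_ /coveredP[x xA ->]].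
  by apply/imsetP; exists x; rewrite ?setU11 ?setU1K.
have dc := double_count_leq (R := covered) up_degree down_degree.
rewrite -(@leq_pmul2r (n - 3 * r)); last by lia.
by apply: leq_trans dc _; rewrite leq_mul2l; apply/orP; right; lia.
Qed.

Lemma card_shadow G r :
  (forall B, B \in G -> noConsec B /\ #|B| = r) -> n + 2 <= 3 * r -> #|G| <= #|shadow G|.
Proof.
move=> levelG r_large.
have down_degree B : B \in G -> r <= #|[set A in shadow G | covered A B]|.
  move=> BG; have [noB cardB] := levelG B BG.
  rewrite -{1}cardB -(@card_in_imset _ _ (fun x => B :\ x)); last first.
    move=> x y xB yB xy.
    by move: (setD11 y B); rewrite -xy in_setD1 yB andbT => /negbFE /eqP ->.
  apply/subset_leq_card/subsetP => _ /imsetP[x xB ->].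
  rewrite !inE covered_setD1 // andbT (noConsecS (subsetDl _ _) noB) /=.
  by apply/existsP; exists B; rewrite BG covered_setD1.
have up_degree A : A \in shadow G -> #|[set B in G | covered A B]| <= r.
  rewrite inE => /andP[noA /existsP[B0 /andP[B0G cAB0]]].
  have [noB0 cardB0] := levelG _ B0G.
  have [x0 x0A B0E] := coveredP _ _ cAB0.
  have x0free : x0 \in freeSites A by rewrite inE x0A -B0E noB0.
  have cardA : #|A|.+1 = r by rewrite -cardB0 (covered_card cAB0).
  have free_ub := card_freeSites_ub noA x0free.
  apply: (@leq_trans #|freeSites A|); last by lia.
  apply: (leq_trans _ (leq_imset_card (fun x => x |: A) _)).
  apply/subset_leq_card/subsetP => B; rewrite inE => /andP[BG /coveredP[x xA BE]].
  apply/imsetP; exists x => //; rewrite inE xA -BE; exact: (proj1 (levelG _ BG)).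
have := double_count_leq (R := fun B A => covered A B) down_degree up_degree.
by rewrite leq_pmul2r //; lia.
Qed.

End NoConsecutive.

Lemma antichainP (T : finType) (F : {set {set T}}) :
  reflect (forall A B, A \in F -> B \in F -> ~~ (A \proper B)) (antichain F).
Proof.
apply: (iffP forall_inP) => [acF A B AF BF | acF A AF].
  by move/forall_inP: (acF A AF) => /(_ B BF).
by apply/forall_inP => B BF; exact: acF.
Qed.

Lemma antichain_uniform (T : finType) (F : {set {set T}}) k :
  (forall A, A \in F -> #|A| = k) -> antichain F.
Proof.
move=> unifF; apply/antichainP => A B AF BF; apply/negP => /proper_card.
by rewrite (unifF A AF) (unifF B BF) ltnn.
Qed.

Lemma antichain_exchange n (F G H : {set {set 'I_n}}) :
  inQ F -> antichain F -> G \subset F -> inQ H -> antichain H ->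
  (forall A B, A \in F -> A \notin G -> B \in H -> ~~ (A \proper B) && ~~ (B \proper A)) ->
  [disjoint H & F] -> #|G| <= #|H| ->
  [/\ inQ ((F :\: G) :|: H), antichain ((F :\: G) :|: H) & #|F| <= #|(F :\: G) :|: H|].
Proof.
move=> /inQP QF /antichainP acF sGF /inQP QH /antichainP acH incomp disjHF cardGH; split.
- by apply/inQP => A /[!inE] /orP[/andP[_ /QF] | /QH].
- apply/antichainP => A B /[!inE] /orP[/andP[AG AF] | AH] /orP[/andP[BG BF] | BH].
  + exact: acF.
  + by case/andP: (incomp A B AF AG BH).
  + by case/andP: (incomp B A BF BG AH).
  + exact: acH.
- have disj : [disjoint F :\: G & H].
    by rewrite disjoint_sym; apply: disjointWr disjHF; apply: subsetDl.
  rewrite (cardsU_disjoint disj) -(cardsID G F) (setIidPr sGF).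
  by rewrite addnC leq_add2l.
Qed.

Section Shifting.

Variables (n : nat) (F : {set {set 'I_n}}) (r : nat).
Hypotheses (QF : inQ F) (acF : antichain F).

Let G := [set A in F | #|A| == r].

Let levelG A : A \in G -> noConsec A /\ #|A| = r.
Proof. by rewrite inE => /andP[AF /eqP]; split => //; move/inQP: QF; apply. Qed.

Let sGF : G \subset F.
Proof. by apply/subsetP => A; rewrite inE => /andP[]. Qed.

Lemma raise_bottom_level : (forall A, A \in F -> r <= #|A|) -> 4 * r < n ->
  exists F1 : {set {set 'I_n}},
    [/\ inQ F1, antichain F1, #|F| <= #|F1| & forall A, A \in F1 -> r < #|A|].
Proof.
move=> geF r_small.
have inShade B : B \in shade G -> exists2 A, A \in G & covered A B /\ #|B| = r.+1.
  rewrite inE => /andP[_ /existsP[A /andP[AG cAB]]]; exists A => //.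
  by rewrite (covered_card cAB) (proj2 (levelG AG)).
have [] := @antichain_exchange n F G (shade G) QF acF sGF.
- by apply/inQP => B; rewrite inE => /andP[].
- by apply: (@antichain_uniform _ _ r.+1) => B /inShade[A _ []].
- move=> A B AF AG /inShade[A' A'G [cA'B cardB]].
  have cardA : r < #|A| by move: AG (geF A AF); rewrite inE AF /=; lia.
  apply/andP; split; first by apply/negP => /proper_card; lia.
  apply/negP => BA; move/antichainP: acF => /(_ A' A (subsetP sGF A' A'G) AF).
  by rewrite (proper_trans (covered_proper cA'B) BA).
- apply/pred0P => B /=; apply/negP => /andP[/inShade[A AG [cAB _]] BF].
  by move/antichainP: acF => /(_ A B (subsetP sGF A AG) BF); rewrite covered_proper.
- exact: card_shade levelG r_small.
move=> QF1 acF1 cardF1; exists ((F :\: G) :|: shade G); split => // A.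
rewrite in_setU in_setD => /orP[/andP[AG AF] | /inShade[_ _ [_ ->]] //].
by move: AG (geF A AF); rewrite inE AF /=; lia.
Qed.

Lemma lower_top_level : (forall A, A \in F -> #|A| <= r) -> n + 2 <= 3 * r ->
  exists F1 : {set {set 'I_n}}, [/\ inQ F1, antichain F1, #|F| <= #|F1| &
     forall A, A \in F1 -> #|A| < r /\ (A \in F \/ #|A|.+1 = r)].
Proof.
move=> leF r_large.
have inShadow A : A \in shadow G -> exists2 B, B \in G & covered A B /\ #|A|.+1 = r.
  rewrite inE => /andP[_ /existsP[B /andP[BG cAB]]]; exists B => //.
  by rewrite -(covered_card cAB) (proj2 (levelG BG)).
have [] := @antichain_exchange n F G (shadow G) QF acF sGF.
- by apply/inQP => A; rewrite inE => /andP[].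
- by apply: (@antichain_uniform _ _ r.-1) => A /inShadow[B _ [_ <-]].
- move=> B A BF BG /inShadow[B' B'G [cAB' cardA]].
  have cardB : #|B| < r by move: BG (leF B BF); rewrite inE BF /=; lia.
  apply/andP; split; last by apply/negP => /proper_card; lia.
  apply/negP => BA; move/antichainP: acF => /(_ B B' BF (subsetP sGF B' B'G)).
  by rewrite (proper_trans BA (covered_proper cAB')).
- apply/pred0P => A /=; apply/negP => /andP[/inShadow[B BG [cAB _]] AF].
  by move/antichainP: acF => /(_ A B AF (subsetP sGF B BG)); rewrite covered_proper.
- exact: card_shadow levelG r_large.
move=> QF1 acF1 cardF1; exists ((F :\: G) :|: shadow G); split => // A.
rewrite in_setU in_setD => /orP[/andP[AG AF] | /inShadow[_ _ [_ cardA]]]; last by split; [lia | right].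
by split; [move: AG (leF A AF); rewrite inE AF /=; lia | left].
Qed.

End Shifting.

Lemma raise_levels n r (F : {set {set 'I_n}}) :
  (forall A, A \in F -> r <= #|A|) -> inQ F -> antichain F ->
  exists F1 : {set {set 'I_n}},
    [/\ inQ F1, antichain F1, #|F| <= #|F1| & forall A, A \in F1 -> n <= 4 * #|A|].
Proof.
have [k] := ubnP (n - r); elim: k r F => // k IHk r F rk geF QF acF.
have [r_large | r_small] := leqP n (4 * r).
  by exists F; split => // A /geF; lia.
have [F1 [QF1 acF1 cardF1 gtF1]] := raise_bottom_level QF acF geF r_small.
have [F2 [QF2 acF2 cardF12 geF2]] := IHk r.+1 F1 ltac:(lia) gtF1 QF1 acF1.
by exists F2; split => //; exact: leq_trans cardF12.
Qed.

Lemma lower_levels n r (F : {set {set 'I_n}}) : 2 <= n ->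
  (forall A, A \in F -> #|A| <= r) -> (forall A, A \in F -> n <= 4 * #|A|) ->
  inQ F -> antichain F ->
  exists F1 : {set {set 'I_n}}, [/\ inQ F1, antichain F1, #|F| <= #|F1| &
    forall A, A \in F1 -> n <= 4 * #|A| /\ 3 * #|A| < n + 2].
Proof.
move=> n_ge2; have [k] := ubnP r; elim: k r F => // k IHk r F rk leF geF QF acF.
have [r_small | r_large] := ltnP (3 * r) (n + 2).
  by exists F; split => // A AF; move: (leF A AF) (geF A AF); lia.
have [F1 [QF1 acF1 cardF1 ltF1]] := lower_top_level QF acF leF r_large.
have leF1 A : A \in F1 -> #|A| <= r.-1 by move/ltF1; lia.
(* A set born in the shadow has size r - 1, and 4 (r - 1) >= n since 3 r >= n + 2 >= 4. *)
have geF1 A : A \in F1 -> n <= 4 * #|A| by move/ltF1 => [_ [/geF // | ]]; lia.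
have [F2 [QF2 acF2 cardF12 inF2]] := IHk r.-1 F1 ltac:(lia) leF1 geF1 QF1 acF1.
by exists F2; split => //; exact: leq_trans cardF12.
Qed.

Theorem mainTheorem11 (n : nat) (F : {set {set 'I_n}}) :
  2 <= n -> inQ F -> antichain F ->
  exists F' : {set {set 'I_n}}, [/\ inQ' F', antichain F' & #|F| <= #|F'|].
Proof.
move=> n_ge2 QF acF.
have [F1 [QF1 acF1 cardF1 geF1]] := @raise_levels n 0 F (fun A _ => leq0n _) QF acF.
have leF1 A : A \in F1 -> #|A| <= n by rewrite -[leqRHS](card_ord n) => _; exact: max_card.
have [F2 [QF2 acF2 cardF12 inF2]] := lower_levels n_ge2 leF1 geF1 QF1 acF1.
exists F2; split => //; last exact: leq_trans cardF12.
apply/forall_inP => A AF2; move/inQP: QF2 => /(_ A AF2) ->.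
by have [] := inF2 A AF2; lia.
Qed.
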